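(* Let $G$ be a connected labeled bipartite graph with an odd number of edges whose vertex set is partitioned into two independent sets $A$ and $B$ with $|A|\neq|B|$. Then $X(G;\mathbf{x},q)$ is not palindromic; in particular it is not symmetric.
   Context: A labeled graph is a finite simple graph with vertex set $[n]$. A proper coloring is $c\colon[n]\to\{1,2,\dots\}$ with adjacent vertices colored differently; $\operatorname{asc}(c)=\#\{ij\in E: i<j,\ c(i)<c(j)\}$. The CQF is $X(G;\mathbf{x},q)=\sum_{c \text{ proper}} x_{c(1)}\cdots x_{c(n)}q^{\operatorname{asc}(c)}$. It is symmetric if each coefficient of $q^k$ is a symmetric function, and palindromic if, with $m=|E|$, the coefficient of $q^k$ equals that of $q^{m-k}$ for all $k$. *)

From mathcomp Require Import all_boot.
Set Implicit Arguments. Unset Strict Implicit. Unset Printing Implicit Defensive.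

(* A labeled simple graph on vertex set [n] = 'I_n (vertex v+1 of the paper is
   v : 'I_n) is given by an adjacency relation e, assumed irreflexive and
   symmetric. *)
Definition simple_graph (n : nat) (e : rel 'I_n) : Prop :=
  irreflexive e /\ symmetric e.

Definition edges (n : nat) (e : rel 'I_n) : {set 'I_n * 'I_n} :=
  [set p : 'I_n * 'I_n | (p.1 < p.2)%N && e p.1 p.2].

Definition num_edges (n : nat) (e : rel 'I_n) : nat := #|edges e|.

Definition connected_graph (n : nat) (e : rel 'I_n) : Prop :=
  forall u v : 'I_n, connect e u v.

Definition independent (n : nat) (e : rel 'I_n) (S : {set 'I_n}) : Prop :=
  forall u v, u \in S -> v \in S -> ~~ e u v.

(* Colorings using only the colors 1..N; color k+1 of the paper is k : 'I_N. *)
Definition proper (n N : nat) (e : rel 'I_n) (c : {ffun 'I_n -> 'I_N}) : bool :=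
  [forall u, forall v, e u v ==> (c u != c v)].

Definition asc (n N : nat) (e : rel 'I_n) (c : {ffun 'I_n -> 'I_N}) : nat :=
  #|[set p in edges e | (c p.1 < c p.2)%N]|.

(* Coefficient of x_1^(a_1) ... x_N^(a_N) q^k in X(G; x, q), where
   alpha = [:: a_1; ...; a_N].  Since every proper coloring contributing to
   this monomial only uses colors 1..N, it suffices to count colorings into
   'I_N. *)
Definition cqf_coef (n : nat) (e : rel 'I_n) (k : nat) (alpha : seq nat) : nat :=
  #|[set c : {ffun 'I_n -> 'I_(size alpha)} |
      [&& proper e c, asc e c == k &
          [forall i : 'I_(size alpha), #|[set v | c v == i]| == nth 0 alpha i]]]|.

Definition cqf_palindromic (n : nat) (e : rel 'I_n) : Prop :=
  forall (k : nat) (alpha : seq nat), (k <= num_edges e)%N ->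
    cqf_coef e k alpha = cqf_coef e (num_edges e - k) alpha.

(* Symmetric: each [q^k] X is invariant under permutations of the variables,
   i.e. the coefficient of x^alpha depends only on the multiset of exponents. *)
Definition cqf_symmetric (n : nat) (e : rel 'I_n) : Prop :=
  forall (k : nat) (alpha beta : seq nat), perm_eq alpha beta ->
    cqf_coef e k alpha = cqf_coef e k beta.

From Pilot Require Import Defs.
From mathcomp Require Import all_boot.
From mathcomp Require Import zify.
Set Implicit Arguments. Unset Strict Implicit. Unset Printing Implicit Defensive.

(* A connected bipartite graph has exactly two proper 2-colorings: the one
   coloring A with 1 and its complement with 2, and the swapped one.  Every
   edge ascends in exactly one of them, so their ascent numbers are k and
   m - k, which differ because m is odd.  As |A| <> |B|, the monomial
   x_1^|A| x_2^|B| comes from the first coloring only and x_1^|B| x_2^|A|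
   from the second only; hence x_1^|A| x_2^|B| appears with q^k but not with
   q^(m-k), and with q^k the two monomials have different coefficients. *)

Lemma ord2_neq_eq (x y z : 'I_2) : x != y -> z != y -> x = z.
Proof. by case: x y z => [[|[|x]] hx] [[|[|y]] hy] [[|[|z]] hz] //= _ _; apply/val_inj. Qed.

Lemma ord2_eq_flip (x y z w : 'I_2) : x != y -> z != w -> (x == z) = (y == w).
Proof. by case: x y z w => [[|[|x]] hx] [[|[|y]] hy] [[|[|z]] hz] [[|[|w]] hw]. Qed.

Definition side_coloring (n : nat) (A : {set 'I_n}) : {ffun 'I_n -> 'I_2} :=
  [ffun u => if u \in A then ord0 else ord_max].

Section ProperColorings.

Variables (n : nat) (e : rel 'I_n).

Lemma properP (N : nat) (c : {ffun 'I_n -> 'I_N}) :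
  reflect (forall u v, e u v -> c u != c v) (Defs.proper e c).
Proof.
apply: (iffP forallP) => [pc u v | pc u].
- by move: (pc u) => /forallP/(_ v)/implyP.
- by apply/forallP => v; apply/implyP/pc.
Qed.

Lemma side_coloringC (A : {set 'I_n}) u : side_coloring (~: A) u != side_coloring A u.
Proof. by rewrite !ffunE inE; case: (u \in A). Qed.

Lemma card_side_coloring_fiber (A : {set 'I_n}) (i : 'I_2) :
  #|[set v | side_coloring A v == i]| = nth 0 [:: #|A|; #|~: A|] i.
Proof.
by case: i => [[|[|i]] hi] //=; apply: eq_card => v; rewrite !inE ffunE; case: (v \in A).
Qed.

Lemma connected_proper_2coloring (c c' : {ffun 'I_n -> 'I_2}) :
  connected_graph e -> Defs.proper e c -> Defs.proper e c' ->
  c = c' \/ forall u, c u != c' u.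
Proof.
move=> conn /properP pc /properP pc'.
have agree_closed : closed e [pred u | c u == c' u].
  by move=> u v euv; apply: ord2_eq_flip; [apply: pc | apply: pc'].
case: (pickP [pred u | c u != c' u]) => [u0 /= neq_u0 | agree]; [right | left].
- move=> v; have := closed_connect agree_closed (conn u0 v).
  by rewrite !inE /= (negbTE neq_u0) => /esym/negbT.
- by apply/ffunP => v; move: (agree v) => /= /negbFE/eqP.
Qed.

End ProperColorings.

Section Bipartition.

Variables (n : nat) (e : rel 'I_n) (A : {set 'I_n}).
Hypotheses (indepA : independent e A) (indepB : independent e (~: A)).

Lemma bipartition_edge u v : e u v -> (u \in A) != (v \in A).
Proof.
move=> euv; case uA: (u \in A); case vA: (v \in A) => //=.
- by move: (indepA uA vA); rewrite euv.
- by move: (@indepB u v); rewrite !inE uA vA euv => /(_ isT isT).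
Qed.

Lemma proper_side_coloring : Defs.proper e (side_coloring A).
Proof.
apply/properP => u v /bipartition_edge.
by rewrite !ffunE; case: (u \in A); case: (v \in A).
Qed.

Lemma asc_side_colorings :
  asc e (side_coloring A) + asc e (side_coloring (~: A)) = num_edges e.
Proof.
set ascA := [set p | (side_coloring A p.1 < side_coloring A p.2)%N].
rewrite /asc /num_edges -(cardsID ascA (edges e)).
congr (_ + _); apply: eq_card => -[u v]; rewrite !inE /= !ffunE ?inE //.
case euv: (e u v); rewrite ?andbF ?andFb //.
by have := bipartition_edge euv; case: (u \in A); case: (v \in A); rewrite ?andbT ?andbF.
Qed.

Hypothesis conn : connected_graph e.

Lemma proper_2coloring_sides (c : {ffun 'I_n -> 'I_2}) :
  Defs.proper e c -> c = side_coloring A \/ c = side_coloring (~: A).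
Proof.
move=> pc; case: (connected_proper_2coloring conn pc proper_side_coloring) => [|c_neq].
  by left.
by right; apply/ffunP => u; apply: ord2_neq_eq (c_neq u) (side_coloringC A u).
Qed.

Hypothesis unbalanced : #|A| != #|~: A|.

Lemma cqf_coef_bipartition k :
  cqf_coef e k [:: #|A|; #|~: A|] = (asc e (side_coloring A) == k).
Proof.
have content_swap : #|[set v | side_coloring (~: A) v == ord0]| != #|A|.
  by rewrite card_side_coloring_fiber setCK /= eq_sym.
rewrite /cqf_coef; have [asc_eq | asc_neq] := eqVneq; last first.
  apply/eqP; rewrite cards_eq0; apply/eqP/setP => c; rewrite !inE.
  apply/and3P => -[/proper_2coloring_sides [->|->] /eqP asc_c /forallP content].
    by move: asc_neq; rewrite asc_c eqxx.
  by move: (content ord0); rewrite (negbTE content_swap).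
rewrite /= -[RHS](cards1 (side_coloring A)); apply: eq_card => c; rewrite !inE.
apply/and3P/eqP => [[/proper_2coloring_sides [//|->] _ /forallP content] | ->].
  by move: (content ord0); rewrite (negbTE content_swap).
split; [exact: proper_side_coloring | by rewrite asc_eq |].
by apply/forallP => i; rewrite card_side_coloring_fiber.
Qed.

End Bipartition.

Theorem proposition5p3 (n : nat) (e : rel 'I_n) :
  simple_graph e ->
  connected_graph e ->
  odd (num_edges e) ->
  (exists A : {set 'I_n},
      [/\ independent e A, independent e (~: A) & #|A| != #|~: A|]) ->
  ~ cqf_palindromic e /\ ~ cqf_symmetric e.
Proof.
move=> _ conn odd_m [A [indepA indepB unbalanced]].
have asc_sum := asc_side_colorings indepA indepB.
set k := asc e (side_coloring A) in asc_sum *.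
have asc_swap : asc e (side_coloring (~: A)) = num_edges e - k by lia.
have k_neq : k != num_edges e - k.
  apply/eqP => k_eq; have m_double : num_edges e = k.*2 by rewrite -addnn; lia.
  by rewrite m_double odd_double in odd_m.
have coefA := cqf_coef_bipartition indepA indepB conn unbalanced.
have unbalancedC : #|~: A| != #|~: ~: A| by rewrite setCK eq_sym.
have indepCC : independent e (~: ~: A) by rewrite setCK.
have coefB := cqf_coef_bipartition indepB indepCC conn unbalancedC.
rewrite setCK in coefB.
split=> [pal | sym].
- have := pal k [:: #|A|; #|~: A|]; rewrite !coefA eqxx (negbTE k_neq).
  have k_le : k <= num_edges e by lia.
  by move/(_ k_le).
- have swap : perm_eq [:: #|A|; #|~: A|] [:: #|~: A|; #|A|] by apply/permP => p /=; lia.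
  have := sym k _ _ swap; rewrite coefA coefB asc_swap eqxx eq_sym.
  by rewrite (negbTE k_neq).
Qed.
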